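(* If $\Gamma\vdash_{TTR}t:A$, then $\Gamma^\diamond\vdash_{TTR^\diamond}t:A^\diamond$.
   Context: $TTR$: types over a second-order language (first-order variables, function symbols, $n$-ary predicate variables and predicate symbols) with a fixed system $\mathbf E$ of equations between first-order terms; atomic formulas $\perp$ and $X(t_1,\dots,t_n)$; constructors $A\to B$, $\forall xA$, $\forall XA$, and $\mu Cx_1\dots x_nA\langle t_1,\dots,t_n\rangle$ for an $n$-ary predicate symbol $C$ occurring and positive in $A$ (positivity defined in the usual way: $X$ positive in $X(\bar t)$, polarity flips on the left of $\to$, unchanged under $\forall$ and $\mu$, and a symbol not occurring is both positive and negative). Subtyping $\subseteq$ is generated by: reflexivity; $A\subseteq A',B\subseteq B'\Rightarrow A'\to B\subseteq A\to B'$; $A[G/v]\subseteq B\Rightarrow\forall vA\subseteq B$; $A\subseteq B\Rightarrow A\subseteq\forall vB$ ($v$ not free in $A$); $A\subseteq B[v/y]\Rightarrow A\subseteq B[w/y]$ for $v=w$ an instance of an equation of $\mathbf E$; transitivity; $D[\mu C\bar xD\langle\bar z\rangle/C(\bar z)][\bar t/\bar x]\subseteq\mu C\bar xD\langle\bar t\rangle$ and its converse; $D[E/C(\bar x)]\subseteq E\Rightarrow\mu C\bar xD\langle\bar t\rangle\subseteq E[\bar t/\bar x]$. Typing $\vdash_{TTR}$: variable axiom, $\to$-intro/elim, $\forall$-intro (variable not in context) and elimination for first- and second-order variables, equational rule for instances of $\mathbf E$, subsumption along $\subseteq$, and rule (Y): from $\Gamma\vdash t:\forall\bar x[C(\bar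 x)\to E]\to\forall\bar x[D\to E]$ infer $\Gamma\vdash(Y)t:\forall\bar x[\mu C\bar xD\langle\bar x\rangle\to E]$ ($C$ not free in $E$ nor in $\Gamma$; $Y$ Turing's fixed point combinator). $TTR^\diamond$ is the subsystem of $TTR$ in which all predicate variables and predicate symbols are 0-ary (so there are no first-order variables, function symbols or equations). With each predicate variable (resp. symbol) $X$ of $TTR$ one associates a 0-ary predicate variable (resp. symbol) $X^\diamond$; for a $TTR$ formula $A$, $A^\diamond$ is obtained by forgetting the first-order part (each $X(t_1,\dots,t_n)$ becomes $X^\diamond$, first-order quantifiers are dropped, $\mu C\bar xA\langle\bar t\rangle$ becomes $\mu C^\diamond A^\diamond$). For $\Gamma=x_1:A_1,\dots,x_n:A_n$, $\Gamma^\diamond=x_1:A_1^\diamond,\dots,x_n:A_n^\diamond$. *)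

(* Syntax of TTR with de Bruijn indices (three separate
   binding sorts: first-order variables, predicate variables, predicate
   symbols), so that alpha-equivalence is syntactic equality and all
   substitutions are capture-avoiding by construction. *)
From Stdlib Require Import List Arith.
Import ListNotations.

Inductive term : Type :=
| TVar (x : nat)
| TFun (f : nat) (ts : list term).

Fixpoint tsubst (s : nat -> term) (t : term) : term :=
  match t with
  | TVar x => s x
  | TFun f ts => TFun f (map (tsubst s) ts)
  end.

Inductive twf (fa : nat -> nat) : term -> Prop :=
| twf_var x : twf fa (TVar x)
| twf_fun f ts : length ts = fa f -> Forall (twf fa) ts -> twf fa (TFun f ts).

Definition scons {T : Type} (a : T) (f : nat -> T) : nat -> T :=
  fun i => match i with 0 => a | S i => f i end.

Definition tshift (k : nat) : nat -> term := fun i => TVar (k + i).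

Definition upn (n : nat) (s : nat -> term) : nat -> term :=
  fun i => if i <? n then TVar i else tsubst (tshift n) (s (i - n)).

Definition single (u : term) : nat -> term := scons u TVar.

(* Convention for a block of n bound first-order variables x1..xn (as in
   forall x1 ... forall xn, in mu C x1..xn A, and in an abstraction
   \x1..xn.G): x_i has de Bruijn index n-i.  [xs n] is the list
   x1,...,xn seen inside the block, and [inst n ts] instantiates the
   block by ts = t1,...,tn. *)
Definition xs (n : nat) : list term := map TVar (rev (seq 0 n)).
Definition inst (n : nat) (ts : list term) : nat -> term :=
  fun i => if i <? n then nth (n - 1 - i) ts (TVar 0) else TVar (i - n).

(* FVar X ts  : X(t1..tn), X a predicate variable
   FSym C ts  : C(t1..tn), C a predicate symbol
   FAll1 A    : forall x A          (binds fo variable 0)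
   FAll2 n A  : forall X A, X n-ary (binds predicate variable 0)
   FMu n A ts : mu C x1..xn A <t1..tn> (binds predicate symbol 0 and the
                block of n fo variables in A) *)
Inductive form : Type :=
| FBot
| FVar (X : nat) (ts : list term)
| FSym (C : nat) (ts : list term)
| FImp (A B : form)
| FAll1 (A : form)
| FAll2 (n : nat) (A : form)
| FMu (n : nat) (A : form) (ts : list term).

Fixpoint fsub (s : nat -> term) (A : form) : form :=
  match A with
  | FBot => FBot
  | FVar X ts => FVar X (map (tsubst s) ts)
  | FSym C ts => FSym C (map (tsubst s) ts)
  | FImp A B => FImp (fsub s A) (fsub s B)
  | FAll1 A => FAll1 (fsub (upn 1 s) A)
  | FAll2 n A => FAll2 n (fsub s A)
  | FMu n A ts => FMu n (fsub (upn n s) A) (map (tsubst s) ts)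
  end.

Definition uprn (r : nat -> nat) : nat -> nat :=
  fun i => match i with 0 => 0 | S i => S (r i) end.

Fixpoint frenV (r : nat -> nat) (A : form) : form :=
  match A with
  | FBot => FBot
  | FVar X ts => FVar (r X) ts
  | FSym C ts => FSym C ts
  | FImp A B => FImp (frenV r A) (frenV r B)
  | FAll1 A => FAll1 (frenV r A)
  | FAll2 n A => FAll2 n (frenV (uprn r) A)
  | FMu n A ts => FMu n (frenV r A) ts
  end.

Fixpoint frenS (r : nat -> nat) (A : form) : form :=
  match A with
  | FBot => FBot
  | FVar X ts => FVar X ts
  | FSym C ts => FSym (r C) ts
  | FImp A B => FImp (frenS r A) (frenS r B)
  | FAll1 A => FAll1 (frenS r A)
  | FAll2 n A => FAll2 n (frenS r A)
  | FMu n A ts => FMu n (frenS (uprn r) A) ts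
  end.

(* Values of a second-order substitution: either a renaming to another
   index, or an n-ary abstraction \x1..xn.G (G has the block x1..xn as
   its innermost fo variables). *)
Inductive pval : Type :=
| PRen (j : nat)
| PAbs (n : nat) (G : form).

Definition papply (p : pval) (mk : nat -> list term -> form) (ts : list term) : form :=
  match p with
  | PRen j => mk j ts
  | PAbs n G => fsub (inst n ts) G
  end.

Definition liftT (k : nat) (p : pval) : pval :=
  match p with PRen j => PRen j | PAbs n G => PAbs n (fsub (upn n (tshift k)) G) end.
Definition bumpV (p : pval) : pval :=
  match p with PRen j => PRen (S j) | PAbs n G => PAbs n (frenV S G) end.
Definition bodyV (p : pval) : pval :=
  match p with PRen j => PRen j | PAbs n G => PAbs n (frenV S G) end.
Definition bumpS (p : pval) : pval :=
  match p with PRen j => PRen (S j) | PAbs n G => PAbs n (frenS S G) end.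
Definition bodyS (p : pval) : pval :=
  match p with PRen j => PRen j | PAbs n G => PAbs n (frenS S G) end.

Fixpoint fsubV (r : nat -> pval) (A : form) : form :=
  match A with
  | FBot => FBot
  | FVar X ts => papply (r X) FVar ts
  | FSym C ts => FSym C ts
  | FImp A B => FImp (fsubV r A) (fsubV r B)
  | FAll1 A => FAll1 (fsubV (fun X => liftT 1 (r X)) A)
  | FAll2 n A => FAll2 n (fsubV (scons (PRen 0) (fun X => bumpV (r X))) A)
  | FMu n A ts => FMu n (fsubV (fun X => bodyS (liftT n (r X))) A) ts
  end.

Fixpoint fsubS (r : nat -> pval) (A : form) : form :=
  match A with
  | FBot => FBot
  | FVar X ts => FVar X ts
  | FSym C ts => papply (r C) FSym ts
  | FImp A B => FImp (fsubS r A) (fsubS r B)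
  | FAll1 A => FAll1 (fsubS (fun C => liftT 1 (r C)) A)
  | FAll2 n A => FAll2 n (fsubS (fun C => bodyV (r C)) A)
  | FMu n A ts => FMu n (fsubS (scons (PRen 0) (fun C => bumpS (liftT n (r C)))) A) ts
  end.

Definition substV (n : nat) (G : form) (A : form) : form :=
  fsubV (scons (PAbs n G) PRen) A.
Definition substS (n : nat) (G : form) (D : form) : form :=
  fsubS (scons (PAbs n G) PRen) D.

(* D[mu C x D<z> / C(z)][t/x], the unfolding of mu C x1..xn D <ts> *)
Definition unfoldMu (n : nat) (D : form) (ts : list term) : form :=
  fsub (inst n ts)
    (substS n (FMu n (fsub (upn n (tshift (n + n))) D) (xs n)) D).

Definition alln (n : nat) (A : form) : form := Nat.iter n FAll1 A.

(* Occurrence and polarity of a predicate symbol. [pol true C A]: C is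
   positive in A; [pol false C A]: C is negative in A. *)
Fixpoint pol (b : bool) (C : nat) (A : form) : Prop :=
  match A with
  | FBot => True
  | FVar _ _ => True
  | FSym D _ => D = C -> b = true
  | FImp A B => pol (negb b) C A /\ pol b C B
  | FAll1 A => pol b C A
  | FAll2 _ A => pol b C A
  | FMu _ A _ => pol b (S C) A
  end.

Fixpoint occS (C : nat) (A : form) : Prop :=
  match A with
  | FBot => False
  | FVar _ _ => False
  | FSym D _ => D = C
  | FImp A B => occS C A \/ occS C B
  | FAll1 A => occS C A
  | FAll2 _ A => occS C A
  | FMu _ A _ => occS (S C) A
  end.

(* Well-formed formulas of TTR: fa = arities of function symbols,
   pa / sa = arities of the (free) predicate variables / symbols;
   mu C x1..xn A <t1..tn> requires C n-ary, occurring and positive in A. *)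
Fixpoint wf (fa pa sa : nat -> nat) (A : form) : Prop :=
  match A with
  | FBot => True
  | FVar X ts => length ts = pa X /\ Forall (twf fa) ts
  | FSym C ts => length ts = sa C /\ Forall (twf fa) ts
  | FImp A B => wf fa pa sa A /\ wf fa pa sa B
  | FAll1 A => wf fa pa sa A
  | FAll2 n A => wf fa (scons n pa) sa A
  | FMu n A ts =>
      length ts = n /\ Forall (twf fa) ts /\ occS 0 A /\ pol true 0 A
      /\ wf fa pa (scons n sa) A
  end.

(* the 0-ary fragment (formulas of TTR^diamond) *)
Fixpoint zf (A : form) : Prop :=
  match A with
  | FBot => True
  | FVar _ ts => ts = []
  | FSym _ ts => ts = []
  | FImp A B => zf A /\ zf B
  | FAll1 _ => False
  | FAll2 n A => n = 0 /\ zf A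
  | FMu n A ts => n = 0 /\ ts = [] /\ zf A
  end.

Fixpoint dia (A : form) : form :=
  match A with
  | FBot => FBot
  | FVar X _ => FVar X []
  | FSym C _ => FSym C []
  | FImp A B => FImp (dia A) (dia B)
  | FAll1 A => dia A
  | FAll2 _ A => FAll2 0 (dia A)
  | FMu _ A _ => FMu 0 (dia A) []
  end.

Definition eqinst (E : term -> term -> Prop) (fa : nat -> nat) (v w : term) : Prop :=
  twf fa v /\ twf fa w /\
  exists u1 u2 (s : nat -> term), E u1 u2 /\ v = tsubst s u1 /\ w = tsubst s u2.

(* lambda-terms (named variables) and Turing's fixed point combinator *)
Inductive lterm : Type :=
| LVar (x : nat)
| LApp (t u : lterm)
| LLam (x : nat) (t : lterm).

Definition turing_half : lterm :=
  LLam 0 (LLam 1 (LApp (LVar 1) (LApp (LApp (LVar 0) (LVar 0)) (LVar 1)))).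
Definition Ycomb : lterm := LApp turing_half turing_half.

Definition ctx := list (nat * form).

Fixpoint lookup (G : ctx) (x : nat) : option form :=
  match G with
  | [] => None
  | (y, A) :: G => if Nat.eqb x y then Some A else lookup G x
  end.

Definition cmap (f : form -> form) (G : ctx) : ctx :=
  map (fun p => (fst p, f (snd p))) G.

Definition WFT := (nat -> nat) -> (nat -> nat) -> form -> Prop.

(* Subtyping, parametrised by the equation system E, the function-symbol
   arities fa and the notion WF of formula of the language; every
   formula of every judgment is required to be a formula (WF). *)
Inductive sub (E : term -> term -> Prop) (fa : nat -> nat) (WF : WFT)
  : (nat -> nat) -> (nat -> nat) -> form -> form -> Prop :=
| sub_refl pa sa A :
    WF pa sa A -> sub E fa WF pa sa A A
| sub_imp pa sa A A' B B' :
    WF pa sa (FImp A' B) -> WF pa sa (FImp A B') ->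
    sub E fa WF pa sa A A' -> sub E fa WF pa sa B B' ->
    sub E fa WF pa sa (FImp A' B) (FImp A B')
| sub_all1L pa sa A B u :
    WF pa sa (FAll1 A) -> WF pa sa B -> twf fa u ->
    sub E fa WF pa sa (fsub (single u) A) B ->
    sub E fa WF pa sa (FAll1 A) B
| sub_all2L pa sa n A G B :
    WF pa sa (FAll2 n A) -> WF pa sa B -> WF pa sa G ->
    sub E fa WF pa sa (substV n G A) B ->
    sub E fa WF pa sa (FAll2 n A) B
| sub_all1R pa sa A B :
    WF pa sa A -> WF pa sa (FAll1 B) ->
    sub E fa WF pa sa (fsub (tshift 1) A) B ->
    sub E fa WF pa sa A (FAll1 B)
| sub_all2R pa sa n A B :
    WF pa sa A -> WF pa sa (FAll2 n B) ->
    sub E fa WF (scons n pa) sa (frenV S A) B ->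
    sub E fa WF pa sa A (FAll2 n B)
| sub_eq pa sa A B v w :
    WF pa sa A -> WF pa sa (fsub (single w) B) -> eqinst E fa v w ->
    sub E fa WF pa sa A (fsub (single v) B) ->
    sub E fa WF pa sa A (fsub (single w) B)
| sub_trans pa sa A B C :
    WF pa sa A -> WF pa sa C ->
    sub E fa WF pa sa A B -> sub E fa WF pa sa B C ->
    sub E fa WF pa sa A C
| sub_unfold pa sa n D ts :
    WF pa sa (unfoldMu n D ts) -> WF pa sa (FMu n D ts) ->
    sub E fa WF pa sa (unfoldMu n D ts) (FMu n D ts)
| sub_fold pa sa n D ts :
    WF pa sa (FMu n D ts) -> WF pa sa (unfoldMu n D ts) ->
    sub E fa WF pa sa (FMu n D ts) (unfoldMu n D ts)
| sub_muind pa sa n D F ts :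
    WF pa sa (FMu n D ts) -> WF pa sa (fsub (inst n ts) F) ->
    sub E fa WF pa sa (substS n (fsub (upn n (tshift n)) F) D) F ->
    sub E fa WF pa sa (FMu n D ts) (fsub (inst n ts) F).

Definition ctxWF (WF : WFT) pa sa (G : ctx) : Prop :=
  Forall (fun p => WF pa sa (snd p)) G.

Inductive ttr (E : term -> term -> Prop) (fa : nat -> nat) (WF : WFT)
  : (nat -> nat) -> (nat -> nat) -> ctx -> lterm -> form -> Prop :=
| ttr_var pa sa G x A :
    ctxWF WF pa sa G -> WF pa sa A -> lookup G x = Some A ->
    ttr E fa WF pa sa G (LVar x) A
| ttr_lam pa sa G x t A B :
    ctxWF WF pa sa G -> WF pa sa (FImp A B) ->
    ttr E fa WF pa sa ((x, A) :: G) t B ->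
    ttr E fa WF pa sa G (LLam x t) (FImp A B)
| ttr_app pa sa G t u A B :
    ctxWF WF pa sa G -> WF pa sa B ->
    ttr E fa WF pa sa G t (FImp A B) -> ttr E fa WF pa sa G u A ->
    ttr E fa WF pa sa G (LApp t u) B
| ttr_all1I pa sa G t A :
    ctxWF WF pa sa G -> WF pa sa (FAll1 A) ->
    ttr E fa WF pa sa (cmap (fsub (tshift 1)) G) t A ->
    ttr E fa WF pa sa G t (FAll1 A)
| ttr_all1E pa sa G t A u :
    ctxWF WF pa sa G -> WF pa sa (fsub (single u) A) -> twf fa u ->
    ttr E fa WF pa sa G t (FAll1 A) ->
    ttr E fa WF pa sa G t (fsub (single u) A)
| ttr_all2I pa sa G t n A :
    ctxWF WF pa sa G -> WF pa sa (FAll2 n A) ->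
    ttr E fa WF (scons n pa) sa (cmap (frenV S) G) t A ->
    ttr E fa WF pa sa G t (FAll2 n A)
| ttr_all2E pa sa G t n A H :
    ctxWF WF pa sa G -> WF pa sa (substV n H A) -> WF pa sa H ->
    ttr E fa WF pa sa G t (FAll2 n A) ->
    ttr E fa WF pa sa G t (substV n H A)
| ttr_eq pa sa G t A v w :
    ctxWF WF pa sa G -> WF pa sa (fsub (single w) A) -> eqinst E fa v w ->
    ttr E fa WF pa sa G t (fsub (single v) A) ->
    ttr E fa WF pa sa G t (fsub (single w) A)
| ttr_sub pa sa G t A B :
    ctxWF WF pa sa G -> WF pa sa B ->
    ttr E fa WF pa sa G t A -> sub E fa WF pa sa A B ->
    ttr E fa WF pa sa G t B
| ttr_Y pa sa G t n D F :
    ctxWF WF pa sa G ->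
    WF pa sa (alln n (FImp (FMu n (fsub (upn n (tshift n)) D) (xs n)) F)) ->
    ttr E fa WF pa (scons n sa) (cmap (frenS S) G) t
      (FImp (alln n (FImp (FSym 0 (xs n)) (frenS S F)))
            (alln n (FImp D (frenS S F)))) ->
    ttr E fa WF pa sa G (LApp Ycomb t)
      (alln n (FImp (FMu n (fsub (upn n (tshift n)) D) (xs n)) F)).

Definition TTR (E : term -> term -> Prop) (fa pa sa : nat -> nat)
  (G : ctx) (t : lterm) (A : form) : Prop :=
  ttr E fa (wf fa) pa sa G t A.

Definition TTRd (G : ctx) (t : lterm) (A : form) : Prop :=
  ttr (fun _ _ => False) (fun _ => 0)
      (fun pa sa A => zf A /\ wf (fun _ => 0) pa sa A)
      (fun _ => 0) (fun _ => 0) G t A.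

Definition dia_ctx (G : ctx) : ctx := cmap dia G.

From Stdlib Require Import List.
Import ListNotations.

(* Forgetting the first-order part turns every first-order substitution into
   the identity and commutes with renamings and with second-order substitutions
   (an abstraction \x1..xn.G becomes the 0-ary \.G^diamond).  Hence every rule
   instance of TTR is sent either to an instance of the same rule of
   TTR^diamond or, for the rules about first-order quantifiers and equations,
   to a trivial step whose conclusion coincides with its premise. *)

Lemma fsub_dia (s : nat -> term) (A : form) : fsub s (dia A) = dia A.
Proof. revert s; induction A; intros s; simpl; congruence. Qed.

Lemma dia_fsub (s : nat -> term) (A : form) : dia (fsub s A) = dia A.
Proof. revert s; induction A; intros s; simpl; congruence. Qed.

Lemma dia_frenV (r : nat -> nat) (A : form) : dia (frenV r A) = frenV r (dia A).
Proof. revert r; induction A; intros r; simpl; congruence. Qed.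

Lemma dia_frenS (r : nat -> nat) (A : form) : dia (frenS r A) = frenS r (dia A).
Proof. revert r; induction A; intros r; simpl; congruence. Qed.

Lemma dia_alln (n : nat) (A : form) : dia (alln n A) = dia A.
Proof. induction n; simpl; auto. Qed.

Definition dia_pval (p : pval) : pval :=
  match p with PRen j => PRen j | PAbs _ G => PAbs 0 (dia G) end.

Lemma fsubV_ext (r r' : nat -> pval) (A : form) :
  (forall i, r i = r' i) -> fsubV r A = fsubV r' A.
Proof.
  revert r r'; induction A; intros r r' H; simpl; try rewrite H; f_equal;
    auto; apply IHA.
  - intros i; rewrite H; reflexivity.
  - intros [|i]; simpl; rewrite ?H; reflexivity.
  - intros i; rewrite H; reflexivity.
Qed.

Lemma fsubS_ext (r r' : nat -> pval) (A : form) :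
  (forall i, r i = r' i) -> fsubS r A = fsubS r' A.
Proof.
  revert r r'; induction A; intros r r' H; simpl; try rewrite H; f_equal;
    auto; apply IHA.
  - intros i; rewrite H; reflexivity.
  - intros i; rewrite H; reflexivity.
  - intros [|i]; simpl; rewrite ?H; reflexivity.
Qed.

Lemma dia_fsubV (r : nat -> pval) (A : form) :
  dia (fsubV r A) = fsubV (fun i => dia_pval (r i)) (dia A).
Proof.
  revert r; induction A; intros r; simpl; auto.
  - destruct (r X); simpl; rewrite ?dia_fsub, ?fsub_dia; reflexivity.
  - rewrite IHA1, IHA2; reflexivity.
  - rewrite IHA; apply fsubV_ext; intros i; destruct (r i); simpl;
      rewrite ?dia_fsub; reflexivity.
  - f_equal; rewrite IHA; apply fsubV_ext; intros [|i]; simpl; auto.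
    destruct (r i); simpl; rewrite ?dia_frenV; reflexivity.
  - f_equal; rewrite IHA; apply fsubV_ext; intros i; destruct (r i); simpl;
      rewrite ?dia_frenS, ?dia_fsub, ?fsub_dia; reflexivity.
Qed.

Lemma dia_fsubS (r : nat -> pval) (A : form) :
  dia (fsubS r A) = fsubS (fun i => dia_pval (r i)) (dia A).
Proof.
  revert r; induction A; intros r; simpl; auto.
  - destruct (r C); simpl; rewrite ?dia_fsub, ?fsub_dia; reflexivity.
  - rewrite IHA1, IHA2; reflexivity.
  - rewrite IHA; apply fsubS_ext; intros i; destruct (r i); simpl;
      rewrite ?dia_fsub; reflexivity.
  - f_equal; rewrite IHA; apply fsubS_ext; intros i; destruct (r i); simpl;
      rewrite ?dia_frenV; reflexivity.
  - f_equal; rewrite IHA; apply fsubS_ext; intros [|i]; simpl; auto.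
    destruct (r i); simpl; rewrite ?dia_frenS, ?dia_fsub, ?fsub_dia; reflexivity.
Qed.

Lemma dia_substV (n : nat) (G A : form) :
  dia (substV n G A) = substV 0 (dia G) (dia A).
Proof.
  unfold substV; rewrite dia_fsubV; apply fsubV_ext; intros [|i]; reflexivity.
Qed.

Lemma dia_substS (n : nat) (G A : form) :
  dia (substS n G A) = substS 0 (dia G) (dia A).
Proof.
  unfold substS; rewrite dia_fsubS; apply fsubS_ext; intros [|i]; reflexivity.
Qed.

Lemma dia_unfoldMu (n : nat) (D : form) (ts : list term) :
  dia (unfoldMu n D ts) = unfoldMu 0 (dia D) [].
Proof.
  unfold unfoldMu.
  rewrite dia_fsub, dia_substS; simpl; rewrite dia_fsub, fsub_dia.
  change (xs 0) with (@nil term).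
  rewrite <- (dia_substS 0 (FMu 0 D [])), fsub_dia; reflexivity.
Qed.

Lemma dia_ctx_fsub (s : nat -> term) (G : ctx) :
  dia_ctx (cmap (fsub s) G) = dia_ctx G.
Proof.
  unfold dia_ctx, cmap; rewrite map_map; apply map_ext; intros [x A]; simpl.
  rewrite dia_fsub; reflexivity.
Qed.

Lemma dia_ctx_frenV (r : nat -> nat) (G : ctx) :
  dia_ctx (cmap (frenV r) G) = cmap (frenV r) (dia_ctx G).
Proof.
  unfold dia_ctx, cmap; rewrite !map_map; apply map_ext; intros [x A]; simpl.
  rewrite dia_frenV; reflexivity.
Qed.

Lemma dia_ctx_frenS (r : nat -> nat) (G : ctx) :
  dia_ctx (cmap (frenS r) G) = cmap (frenS r) (dia_ctx G).
Proof.
  unfold dia_ctx, cmap; rewrite !map_map; apply map_ext; intros [x A]; simpl.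
  rewrite dia_frenS; reflexivity.
Qed.

Lemma lookup_dia_ctx (G : ctx) (x : nat) :
  lookup (dia_ctx G) x = option_map dia (lookup G x).
Proof.
  induction G as [|[y B] G IH]; simpl; auto. destruct (Nat.eqb x y); auto.
Qed.

Definition wf0 : WFT := fun pa sa A => zf A /\ wf (fun _ => 0) pa sa A.

Definition nullary (a : nat -> nat) : Prop := forall i, a i = 0.

Lemma nullary_scons (a : nat -> nat) : nullary a -> nullary (scons 0 a).
Proof. intros Ha [|i]; simpl; auto. Qed.

Lemma pol_dia (b : bool) (C : nat) (A : form) : pol b C A -> pol b C (dia A).
Proof. revert b C; induction A; simpl; intuition. Qed.

Lemma occS_dia (C : nat) (A : form) : occS C A -> occS C (dia A).
Proof. revert C; induction A; simpl; intuition. Qed.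

Lemma wf0_dia (fa pa sa pa' sa' : nat -> nat) (A : form) :
  nullary pa' -> nullary sa' -> wf fa pa sa A -> wf0 pa' sa' (dia A).
Proof.
  unfold wf0; revert pa sa pa' sa'.
  induction A; intros pa sa pa' sa' Hp Hs H; simpl in *.
  - tauto.
  - rewrite Hp; auto.
  - rewrite Hs; auto.
  - destruct H as [H1 H2].
    destruct (IHA1 _ _ _ _ Hp Hs H1), (IHA2 _ _ _ _ Hp Hs H2); tauto.
  - eauto.
  - destruct (IHA _ _ (scons 0 pa') sa' (nullary_scons _ Hp) Hs H); auto.
  - destruct H as (_ & _ & Ho & Hpo & Hw).
    destruct (IHA _ _ pa' (scons 0 sa') Hp (nullary_scons _ Hs) Hw).
    auto 10 using occS_dia, pol_dia.
Qed.

Lemma ctxWF0_dia (fa pa sa pa' sa' : nat -> nat) (G : ctx) :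
  nullary pa' -> nullary sa' -> ctxWF (wf fa) pa sa G ->
  ctxWF wf0 pa' sa' (dia_ctx G).
Proof.
  unfold ctxWF, dia_ctx, cmap; intros Hp Hs H. rewrite Forall_map.
  eapply Forall_impl; [|exact H]; intros [y B]; simpl; eapply wf0_dia; eauto.
Qed.

Ltac forget_wf pa' sa' Hp Hs :=
  repeat match goal with
  | H : wf _ _ _ _ |- _ => apply (wf0_dia _ _ _ pa' sa' _ Hp Hs) in H
  | H : ctxWF (wf _) _ _ _ |- _ => apply (ctxWF0_dia _ _ _ pa' sa' _ Hp Hs) in H
  end.

Lemma sub_dia (E : term -> term -> Prop) (fa pa sa pa' sa' : nat -> nat)
  (A B : form) :
  nullary pa' -> nullary sa' -> sub E fa (wf fa) pa sa A B ->
  sub (fun _ _ => False) (fun _ => 0) wf0 pa' sa' (dia A) (dia B).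
Proof.
  intros Hp Hs H; revert pa' sa' Hp Hs.
  induction H; intros pa' sa' Hp Hs; forget_wf pa' sa' Hp Hs; simpl in *;
    rewrite ?dia_fsub, ?dia_unfoldMu in *.
  - apply sub_refl; auto.
  - apply sub_imp; auto.
  - auto.
  - apply (sub_all2L _ _ _ _ _ _ _ (dia G)); auto.
    rewrite <- (dia_substV n); auto.
  - auto.
  - apply sub_all2R; auto.
    rewrite <- dia_frenV; apply IHsub; auto using nullary_scons.
  - auto.
  - eapply sub_trans; eauto.
  - apply sub_unfold; auto.
  - apply sub_fold; auto.
  - (* mu-induction for the 0-ary mu, whose conclusion is F[ /x] = F *)
    rewrite <- (fsub_dia (inst 0 []) F).
    apply sub_muind; rewrite ?fsub_dia; auto.
    specialize (IHsub pa' sa' Hp Hs).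
    rewrite dia_substS, dia_fsub in IHsub; exact IHsub.
Qed.

Lemma ttr_dia (E : term -> term -> Prop) (fa pa sa pa' sa' : nat -> nat)
  (G : ctx) (t : lterm) (A : form) :
  nullary pa' -> nullary sa' -> ttr E fa (wf fa) pa sa G t A ->
  ttr (fun _ _ => False) (fun _ => 0) wf0 pa' sa' (dia_ctx G) t (dia A).
Proof.
  intros Hp Hs H; revert pa' sa' Hp Hs.
  induction H; intros pa' sa' Hp Hs; forget_wf pa' sa' Hp Hs; simpl in *;
    rewrite ?dia_fsub, ?dia_substV, ?dia_alln, ?dia_ctx_fsub in *.
  - apply ttr_var; auto. rewrite lookup_dia_ctx, H1; reflexivity.
  - apply ttr_lam; auto.
  - eapply ttr_app; eauto.
  - auto.
  - auto.
  - apply ttr_all2I; auto.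
    rewrite <- dia_ctx_frenV; auto using nullary_scons.
  - apply ttr_all2E; auto.
  - auto.
  - eapply ttr_sub; eauto using sub_dia.
  - (* the 0-ary instance of rule (Y), with n = 0 so that alln and xs vanish *)
    specialize (IHttr pa' (scons 0 sa') Hp (nullary_scons _ Hs)).
    simpl in *; rewrite dia_frenS, dia_ctx_frenS in IHttr; rewrite dia_fsub in *.
    rewrite <- (fsub_dia (upn 0 (tshift 0)) D).
    apply (ttr_Y _ _ _ _ _ _ _ 0); simpl; rewrite ?fsub_dia; auto.
Qed.

Theorem theorem3p3 (E : term -> term -> Prop) (fa pa sa : nat -> nat)
  (G : ctx) (t : lterm) (A : form) :
  TTR E fa pa sa G t A -> TTRd (dia_ctx G) t (dia A).
Proof.
  apply ttr_dia; intros i; reflexivity.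
Qed.
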